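(* Let $n > 1$ be a square-free positive integer. Then $n$ is $\pi/4$-congruent if and only if $n$ is the square-free part of $rs(r^2+2rs-s^2)$ for some relatively prime positive integers $r,s$. Likewise, $n$ is $3\pi/4$-congruent if and only if $n$ is the square-free part of $rs(r^2-2rs-s^2)$ for some relatively prime positive integers $r,s$.
   Context: For $\theta \in \{\pi/4,3\pi/4\}$, a positive integer $n$ is $\theta$-congruent if there exist positive rationals $a,b,c$ such that the triangle with sides $a$, $b\sqrt2$, $c$ has angle $\theta$ opposite $c$ and area $n$; equivalently $ab = 2n$ and $c^2 = a^2+2b^2-2ab$ (for $\theta = \pi/4$), resp. $c^2 = a^2+2b^2+2ab$ (for $\theta=3\pi/4$). The square-free part of a non-zero integer $N$ is the unique square-free integer $n$ with $N/n$ a square of a rational number. *)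

From mathcomp Require Import all_boot all_order all_algebra.
Set Implicit Arguments. Unset Strict Implicit. Unset Printing Implicit Defensive.
Import Order.TTheory GRing.Theory Num.Theory.
Local Open Scope ring_scope.

(* A positive integer n is pi/4-congruent: there are positive rationals a,b,c
   with ab = 2n and c^2 = a^2 + 2b^2 - 2ab (triangle with sides a, b*sqrt2, c,
   angle pi/4 opposite c, area n). *)
Definition pi4_congruent (n : nat) : Prop :=
  exists a b c : rat, [/\ 0 < a, 0 < b, 0 < c,
    a * b = 2 * n%:R & c ^+ 2 = a ^+ 2 + 2 * b ^+ 2 - 2 * a * b].

Definition pi34_congruent (n : nat) : Prop :=
  exists a b c : rat, [/\ 0 < a, 0 < b, 0 < c,
    a * b = 2 * n%:R & c ^+ 2 = a ^+ 2 + 2 * b ^+ 2 + 2 * a * b].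

Definition sqfree_nat (n : nat) : bool :=
  (0 < n)%N && [forall d : 'I_n.+1, (1 < d)%N ==> ~~ (d * d %| n)%N].

Definition sqfree_int (m : int) : bool := sqfree_nat `|m|%N.

Definition is_sqfree_part (n N : int) : Prop :=
  N != 0 /\ sqfree_int n /\ exists q : rat, N%:~R / n%:~R = q ^+ 2.

(* With x := a - e b, where e = 1 for pi/4 and e = -1 for 3pi/4, the cosine
   law c^2 = a^2 + 2b^2 - 2eab becomes c^2 = x^2 + b^2, and the usual
   parameter (c - x)/b = b/(c + x) of this rational point on the circle of
   radius c is a positive rational s/r.  The relations r (c - x) = s b and
   r b = s (c + x) give b D = 2rsa with D = r^2 + 2ers - s^2, and together
   with ab = 2n this shows rsD = n (bD / 2n)^2.  Conversely, if rsD = n q^2 with q > 0, then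
   a = nq/(rs), b = 2nq/D, c = b (r^2 + s^2)/(2rs) is a triangle of the
   required kind. *)

From mathcomp Require Import all_boot all_order all_algebra.
From mathcomp Require Import ring.
Set Implicit Arguments. Unset Strict Implicit. Unset Printing Implicit Defensive.
Import Order.TTheory GRing.Theory Num.Theory.
Local Open Scope ring_scope.

(* [e] stands for sqrt 2 * cos theta. *)
Definition angle_form {R : pzRingType} (e r s : R) : R :=
  r ^+ 2 + 2 * e * r * s - s ^+ 2.

Lemma rmorph_angle_form (R S : pzRingType) (f : {rmorphism R -> S}) (e r s : R) :
  f (angle_form e r s) = angle_form (f e) (f r) (f s).
Proof. by rewrite /angle_form rmorphB rmorphD !rmorphXn !rmorphM rmorph_nat. Qed.

Lemma rat_gt0_coprime_frac (t : rat) : 0 < t ->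
  exists r s : nat, [/\ (0 < r)%N, (0 < s)%N, coprime r s & t = s%:R / r%:R].
Proof.
move=> t0; exists `|denq t|%N, `|numq t|%N; split.
- by rewrite absz_gt0 denq_neq0.
- by rewrite absz_gt0 numq_eq0 gt_eqF.
- by rewrite coprime_sym coprime_num_den.
by rewrite !natr_absz !gtr0_norm ?denq_gt0 ?numq_gt0 ?divq_num_den.
Qed.

Section AngleTriangle.

Variables (R : realFieldType) (e : R).
Hypothesis e2 : e ^+ 2 = 1.

Lemma triangle_lawE (a b : R) :
  a ^+ 2 + 2 * b ^+ 2 - 2 * e * a * b = (a - e * b) ^+ 2 + b ^+ 2.
Proof. by rewrite sqrrB exprMn e2 mul1r; ring. Qed.

Lemma triangle_slope_gt0 (a b c : R) : 0 < b -> 0 < c ->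
  c ^+ 2 = a ^+ 2 + 2 * b ^+ 2 - 2 * e * a * b -> 0 < (c - a + e * b) / b.
Proof.
rewrite triangle_lawE => b0 c0 law; rewrite divr_gt0 //.
have -> : c - a + e * b = c - (a - e * b) by ring.
rewrite subr_gt0; apply: le_lt_trans (ler_norm _) _.
rewrite -(ltr_pXn2r (_ : 0 < 2)%N) ?nnegrE ?normr_ge0 ?ltW //.
by rewrite real_normK ?num_real // law ltrDl exprn_gt0.
Qed.

Lemma triangle_slope_form (a b c r s : R) : b != 0 ->
  c ^+ 2 = a ^+ 2 + 2 * b ^+ 2 - 2 * e * a * b ->
  r * (c - a + e * b) = s * b -> b * angle_form e r s = 2 * r * s * a.
Proof.
rewrite triangle_lawE => b0; set x := a - e * b => law slope.
have {}slope : r * (c - x) = s * b by rewrite -slope /x; ring.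
have slope' : r * b = s * (c + x).
  apply: (mulIf b0); transitivity (r * ((c - x) * (c + x))).
    by rewrite -subr_sqr law; ring.
  by rewrite mulrA slope; ring.
transitivity (r * (s * (c + x)) - s * (r * (c - x)) + 2 * e * r * s * b).
  by rewrite -slope' slope /angle_form; ring.
by rewrite /x; ring.
Qed.

Lemma triangle_square_class (n a b c r s : R) :
  0 < a -> 0 < b -> 0 < r -> 0 < s -> a * b = 2 * n ->
  c ^+ 2 = a ^+ 2 + 2 * b ^+ 2 - 2 * e * a * b ->
  r * (c - a + e * b) = s * b ->
  0 < angle_form e r s /\
  r * s * angle_form e r s = n * (b * angle_form e r s / (2 * n)) ^+ 2.
Proof.
move=> a0 b0 r0 s0 ab law slope.
have DE : angle_form e r s = 2 * r * s * a / b.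
  by rewrite -(triangle_slope_form (lt0r_neq0 b0) law slope) mulrC mulKf ?gt_eqF.
have nE : n = a * b / 2 by rewrite ab mulrC mulKf ?pnatr_eq0.
split; first by rewrite DE !pmulr_rgt0 ?invr_gt0.
rewrite DE nE; field.
by rewrite !gt_eqF.
Qed.

Lemma angle_form_triangle (b r s : R) : r != 0 -> s != 0 ->
  (b * (r ^+ 2 + s ^+ 2) / (2 * r * s)) ^+ 2 =
    (b * angle_form e r s / (2 * r * s)) ^+ 2 + 2 * b ^+ 2
    - 2 * e * (b * angle_form e r s / (2 * r * s)) * b.
Proof.
move=> r0 s0; rewrite triangle_lawE /angle_form; field.
by rewrite r0 s0.
Qed.

Lemma square_class_triangle (n r s q : R) :
  0 < n -> 0 < r -> 0 < s -> 0 < q -> r * s * angle_form e r s = n * q ^+ 2 ->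
  exists a b c : R, [/\ 0 < a, 0 < b, 0 < c, a * b = 2 * n &
    c ^+ 2 = a ^+ 2 + 2 * b ^+ 2 - 2 * e * a * b].
Proof.
move=> n0 r0 s0 q0 class.
have D0 : 0 < angle_form e r s.
  by rewrite -(pmulr_rgt0 _ (mulr_gt0 r0 s0)) class pmulr_rgt0 ?exprn_gt0.
have rs0 : 0 < 2 * r * s by rewrite !mulr_gt0 ?ltr0n.
set b := 2 * n * q / angle_form e r s.
have b0 : 0 < b by rewrite divr_gt0 ?mulr_gt0 ?ltr0n.
exists (b * angle_form e r s / (2 * r * s)), b, (b * (r ^+ 2 + s ^+ 2) / (2 * r * s)).
split; last exact: angle_form_triangle _ (lt0r_neq0 r0) (lt0r_neq0 s0).
- exact: divr_gt0 (mulr_gt0 b0 D0) rs0.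
- exact: b0.
- exact: divr_gt0 (mulr_gt0 b0 (addr_gt0 (exprn_gt0 2 r0) (exprn_gt0 2 s0))) rs0.
have -> : b * angle_form e r s / (2 * r * s) * b =
          2 * n * (n * q ^+ 2) / (r * s * angle_form e r s).
  by rewrite /b; field; rewrite !gt_eqF ?pnatr_eq0.
by rewrite -class; field; rewrite !gt_eqF.
Qed.

End AngleTriangle.

(* [T] and [P] are given extensionally so that the statement instantiates
   directly at the literal polynomials of [pi4_congruent], [pi34_congruent]
   and the paper. *)
Theorem angle_congruent_iff_sqfree_part (e : int) (n : nat)
    (T : rat -> rat -> rat) (P : nat -> nat -> int) :
  e ^+ 2 = 1 -> sqfree_nat n ->
  (forall a b, T a b = a ^+ 2 + 2 * b ^+ 2 - 2 * e%:~R * a * b) ->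
  (forall r s, P r s = r%:Z * s%:Z * angle_form e r%:Z s%:Z) ->
  (exists a b c : rat, [/\ 0 < a, 0 < b, 0 < c, a * b = 2 * n%:R & c ^+ 2 = T a b])
  <-> (exists r s : nat, [/\ (0 < r)%N, (0 < s)%N, coprime r s &
         is_sqfree_part n%:Z (P r s)]).
Proof.
move=> e2 sqn hT hP.
have n0 : 0 < n%:R :> rat by rewrite ltr0n; case/andP: sqn.
have eR2 : e%:~R ^+ 2 = 1 :> rat by rewrite -rmorphXn e2.
have PE r s : (P r s)%:~R = r%:R * s%:R * angle_form e%:~R r%:R s%:R :> rat.
  by rewrite hP !intrM rmorph_angle_form.
split.
- case=> a [b [c [a0 b0 c0 ab]]]; rewrite hT => law.
  have [r [s [r0 s0 rs slope]]] := rat_gt0_coprime_frac (triangle_slope_gt0 eR2 b0 c0 law).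
  have [r0R s0R] : 0 < r%:R :> rat /\ 0 < s%:R :> rat by rewrite !ltr0n.
  have {}slope : r%:R * (c - a + e%:~R * b) = s%:R * b.
    by apply/eqP; rewrite mulrC -eqr_div ?slope ?lt0r_neq0.
  have [D0 class] := triangle_square_class eR2 a0 b0 r0R s0R ab law slope.
  exists r, s; split => //; split; last split => //.
    by rewrite -(intr_eq0 rat) PE lt0r_neq0 ?mulr_gt0.
  exists (b * angle_form e%:~R r%:R s%:R / (2 * n%:R)).
  by rewrite PE class mulrC mulKf ?lt0r_neq0.
case=> r [s [r0 s0 _ [N0 [_ [q Nq]]]]].
have [r0R s0R] : 0 < r%:R :> rat /\ 0 < s%:R :> rat by rewrite !ltr0n.
rewrite -(intr_eq0 rat) PE in N0; rewrite PE in Nq.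
have q0 : 0 < `|q|.
  by rewrite normr_gt0 -sqrf_eq0 -Nq mulf_eq0 invr_eq0 negb_or N0 lt0r_neq0.
have class : r%:R * s%:R * angle_form e%:~R r%:R s%:R = n%:R * `|q| ^+ 2.
  by rewrite real_normK ?num_real // -Nq [RHS]mulrC divfK ?lt0r_neq0.
have [a [b [c [a0 b0 c0 ab law]]]] := square_class_triangle eR2 n0 r0R s0R q0 class.
by exists a, b, c; rewrite hT.
Qed.

Theorem proposition5p1 (n : nat) :
  (1 < n)%N -> sqfree_nat n ->
  (pi4_congruent n <->
     exists r s : nat, [/\ (0 < r)%N, (0 < s)%N, coprime r s &
       is_sqfree_part n%:Z
         (r%:Z * s%:Z * (r%:Z ^+ 2 + 2 * r%:Z * s%:Z - s%:Z ^+ 2))])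
  /\
  (pi34_congruent n <->
     exists r s : nat, [/\ (0 < r)%N, (0 < s)%N, coprime r s &
       is_sqfree_part n%:Z
         (r%:Z * s%:Z * (r%:Z ^+ 2 - 2 * r%:Z * s%:Z - s%:Z ^+ 2))]).
Proof.
move=> _ sqn; split.
  apply: (angle_congruent_iff_sqfree_part (e := 1) _ sqn) => [|a b|r s].
  - exact: expr1n.
  - by rewrite rmorph1; ring.
  - by rewrite /angle_form; ring.
apply: (angle_congruent_iff_sqfree_part (e := -1) _ sqn) => [|a b|r s].
- by rewrite sqrrN expr1n.
- by rewrite rmorphN1; ring.
- by rewrite /angle_form; ring.
Qed.
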